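(* Let $A$ be a finite alphabet, $E\subseteq W(A)$ and $\vec s\in V^\infty(A)$ such that $E$ is large in $\vec s$. Then there exists an infinite extracted subsequence $\vec t=(t_n(x))_{n=0}^\infty$ of $\vec s$ such that $\langle\vec t\rangle_c\subseteq E$.
   Context: $\mathbb N=\{0,1,2,\dots\}$. Let $A$ be a finite nonempty alphabet. $W(A)$ denotes the set of all finite words over $A$, including the empty word; words are concatenated by juxtaposition. Fix a symbol $x\notin A$. A variable word over $A$ is a finite word over $A\cup\{x\}$ in which $x$ occurs at least once; $V(A)$ is the set of variable words. For $s(x)\in V(A)$ and $a\in A\cup\{x\}$, $s(a)$ is obtained by replacing every occurrence of $x$ by $a$. $V^\infty(A)$ is the set of infinite sequences of variable words. For a sequence $(s_n(x))_{n\in I}$ of variable words indexed by a set $I\subseteq\mathbb N$ that is either a finite interval or of the form $\{m,m+1,\dots\}$: the constant span $\langle (s_n(x))_{n\in I}\rangle_c$ is the set of all words $s_{l_0}(a_0)s_{l_1}(a_1)\cdots s_{l_j}(a_j)$ with $j\ge 0$, $l_0<\dots<l_j$ in $I$ and $a_0,\dots,a_j\in A$; the variable span $\langle (s_n(x))_{n\in I}\rangle_v$ is the set of all words $s_{l_0}(a_0)\cdots s_{l_j}(a_j)$ with $j\ge0$, $l_0<\dots<l_j$ in $I$, $a_0,\dots,a_j\in A\cup\{x\}$ and at least one $a_i=x$. Extracted subsequences: let $\vec s=(s_n(x))_{n=0}^\infty\in V^\infty(A)$. A finite sequence $(t_n(x))_{n=0}^l$ of variable words is an extracted subsequence of $\vec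 s$ if there exist integers $0=m_0<m_1<\dots<m_{l+1}$ with $t_i(x)\in\langle (s_n(x))_{n=m_i}^{m_{i+1}-1}\rangle_v$ for all $0\le i\le l$. An infinite sequence $\vec t=(t_n(x))_{n=0}^\infty$ is an extracted subsequence of $\vec s$ if every initial segment $(t_n(x))_{n=0}^l$ is a finite extracted subsequence of $\vec s$. We write $\vec t\le\vec s$. A set $E\subseteq W(A)$ is large in $\vec s\in V^\infty(A)$ if $E\cap\langle\vec w\rangle_c\neq\emptyset$ for every infinite extracted subsequence $\vec w$ of $\vec s$. *)

From mathcomp Require Import all_boot.
Set Implicit Arguments. Unset Strict Implicit. Unset Printing Implicit Defensive.

(* Words over A: seq A.  Words over A ∪ {x}: seq (option A), with None = x.
   A variable word is a word over option A containing None. *)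
Section Words.
Variable A : finType.

Definition is_varword (s : seq (option A)) : bool := None \in s.

Definition csub (s : seq (option A)) (a : A) : seq A := map (fun o => odflt a o) s.

Definition vsub (s : seq (option A)) (a : option A) : seq (option A) :=
  map (fun o => if o is Some b then Some b else a) s.

Definition cspan (s : nat -> seq (option A)) (I : pred nat) (w : seq A) : Prop :=
  exists (ls : seq nat) (as_ : seq A),
    size ls = size as_ /\ 0 < size ls /\ sorted ltn ls /\ all I ls /\
    w = flatten [seq csub (s p.1) p.2 | p <- zip ls as_].

Definition vspan (s : nat -> seq (option A)) (I : pred nat) (w : seq (option A)) : Prop :=
  exists (ls : seq nat) (as_ : seq (option A)),
    size ls = size as_ /\ 0 < size ls /\ sorted ltn ls /\ all I ls /\
    None \in as_ /\
    w = flatten [seq vsub (s p.1) p.2 | p <- zip ls as_].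

Definition fin_extracted (t s : nat -> seq (option A)) (l : nat) : Prop :=
  exists m : nat -> nat, m 0 = 0 /\
    (forall i, i <= l -> m i < m i.+1) /\
    (forall i, i <= l -> vspan s (fun n => (m i <= n) && (n < m i.+1)) (t i)).

Definition extracted (t s : nat -> seq (option A)) : Prop :=
  forall l, fin_extracted t s l.

Definition large (E : seq A -> Prop) (s : nat -> seq (option A)) : Prop :=
  forall w, extracted w s -> exists u, E u /\ cspan w predT u.

End Words.

From mathcomp Require Import all_boot zify.
From mathcomp Require boolp classical_sets filter.
From Stdlib Require Import ClassicalEpsilon ProofIrrelevance FunctionalExtensionality.
From Stdlib Require Import PropExtensionality Classical.

(* Corollary 2.11 (a form of Carlson's theorem), proved by the idempotent
   ultrafilter method of Bergelson, Blass and Hindman.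

   A combination s_{l_0}(o_0) ... s_{l_j}(o_j) of the given variable words is
   coded by the "located word" [:: (l_0, o_0); ...; (l_j, o_j)].  The
   ultrafilters on located words that contain, for every n, the increasing
   located words beyond n form a compact right-topological semigroup under
   p + r = {B | {x | {y | x ++ y in B} in r} in p}, and substituting a letter
   for the variable is a homomorphism of it.
   - General part: compactness and Zorn's lemma yield minimal closed sets, and
     the Ellis-Numakura lemma yields idempotents in closed subsemigroups.
   - Algebraic part: there are an idempotent q concentrated on constant words,
     minimal among such idempotents, and an idempotent p concentrated on
     variable words with p + q = q + p = p; then every substitution image of p
     is an idempotent constant ultrafilter below q, hence equal to q.
   - Combinatorial part: if q contains the located words whose value lies in C,
     a recursive choice of variable located words in p produces an extracted
     subsequence all of whose constant combinations have value in C.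
   The theorem follows by applying this to E or to its complement; the latter
   contradicts the largeness of E. *)

Set Implicit Arguments. Unset Strict Implicit. Unset Printing Implicit Defensive.

Section Ultrafilters.
Variable A : finType.

(* Located words: lists of (index, letter or variable); None is the variable. *)
Definition lword := seq (nat * option A).

Definition idxs (x : lword) : seq nat := map fst x.
Definition first_idx (x : lword) : nat := head 0 (idxs x).
Definition last_idx (x : lword) : nat := last 0 (idxs x).

Definition increasing (x : lword) : bool := (x != [::]) && sorted ltn (idxs x).

Definition beyond (n : nat) (x : lword) : Prop := increasing x /\ n < first_idx x.

Definition precedes (x y : lword) : bool := last_idx x < first_idx y.

Definition shift (x : lword) (B : lword -> Prop) : lword -> Prop :=
  fun y => precedes x y /\ B (x ++ y).

Lemma first_idx_cat x y : x != [::] -> first_idx (x ++ y) = first_idx x.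
Proof. by case: x. Qed.

Lemma last_idx_cat x y : y != [::] -> last_idx (x ++ y) = last_idx y.
Proof.
case: y => // b y _; rewrite /last_idx /idxs map_cat last_cat /=.
by case: (map fst x) => //= c l; rewrite last_cat.
Qed.

Lemma increasing_cat x y :
  increasing x -> increasing y -> precedes x y -> increasing (x ++ y).
Proof.
case: x => // [[n o] x] /andP[_ sx]; case: y => // [[m o'] y] /andP[_ sy].
rewrite /precedes /increasing /last_idx /first_idx /idxs /= in sx sy * => lt.
by rewrite map_cat cat_path sx /= lt sy.
Qed.

Lemma beyond_precedes x y : beyond (last_idx x) y -> precedes x y.
Proof. by case. Qed.

Lemma beyond_nil n y : beyond n y -> y != [::].
Proof. by case=> /andP[]. Qed.

Lemma beyond_mono n m x : n <= m -> beyond m x -> beyond n x.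
Proof. by move=> nm [w h]; split => //; exact: leq_ltn_trans h. Qed.

Lemma increasing_bounds x : increasing x ->
  forall n, n \in idxs x -> first_idx x <= n <= last_idx x.
Proof.
case: x => // [[k o] x] /andP[_]; rewrite /first_idx /last_idx /idxs /=.
elim: (map fst x) k => [|b l IH] a /=.
  by move=> _ n; rewrite inE => /eqP ->; rewrite leqnn.
move=> /andP[ab pb] n; rewrite inE => /orP[/eqP ->|/(IH _ pb) /andP[h1 h2]].
- have /andP[_ h] := IH b pb b (mem_head _ _); rewrite leqnn /=; lia.
- apply/andP; split => //; lia.
Qed.

Lemma first_le_last x : increasing x -> first_idx x <= last_idx x.
Proof.
by case: x => // [[k o] x] w; have /andP[] := increasing_bounds w (mem_head _ _).
Qed.

Unset Implicit Arguments.
Record ufilter := UFilter {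
  uf_set :> (lword -> Prop) -> Prop;
  uf_mono : forall B C : lword -> Prop, uf_set B -> (forall x, B x -> C x) -> uf_set C;
  uf_meet : forall B C : lword -> Prop, uf_set B -> uf_set C -> uf_set (fun x => B x /\ C x);
  uf_proper : uf_set (fun _ => False) -> False;
  uf_ultra : forall B, uf_set B \/ uf_set (fun x => ~ B x);
  uf_beyond : forall n, uf_set (beyond n)
}.
Set Implicit Arguments.
Arguments uf_mono {u B C}. Arguments uf_meet {u B C}.

Lemma ufilter_ext (p r : ufilter) : (forall B, p B <-> r B) -> p = r.
Proof.
case: p r => Fp S1 I1 O1 U1 T1 [Fr S2 I2 O2 U2 T2] /= H.
have E : Fp = Fr.
  apply: functional_extensionality => B; apply: propositional_extensionality; exact: H.
subst Fr; f_equal; apply: proof_irrelevance.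
Qed.

Lemma ufilter_incl_eq (p r : ufilter) : (forall B, p B -> r B) -> p = r.
Proof.
move=> H; apply: ufilter_ext => B; split; first exact: H.
move=> rB; case: (uf_ultra p B) => // /H nB.
by case: (uf_proper r); apply: uf_mono (uf_meet rB nB) _ => x [].
Qed.

Lemma uf_true (p : ufilter) : p (fun _ => True).
Proof. by apply: uf_mono (uf_beyond p 0) _. Qed.

Lemma uf_inhabited (p : ufilter) B : p B -> exists x, B x.
Proof.
move=> pB; apply: NNPP => nE; apply: (uf_proper p).
by apply: uf_mono pB _ => x Bx; apply: nE; exists x.
Qed.

Lemma uf_compl (p : ufilter) B : p B -> p (fun x => ~ B x) -> False.
Proof. move=> h1 h2; apply: (uf_proper p); apply: uf_mono (uf_meet h1 h2) _ => x [] //. Qed.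

Lemma uf_meet3 (p : ufilter) B C D : p B -> p C -> p D -> p (fun x => B x /\ C x /\ D x).
Proof. by move=> h1 h2 h3; apply: uf_meet h1 (uf_meet h2 h3). Qed.

Lemma uf_forall (p : ufilter) (B : A -> lword -> Prop) :
  (forall b, p (B b)) -> p (fun x => forall b, B b x).
Proof.
move=> H.
have L : forall l : seq A, p (fun x => forall b, b \in l -> B b x).
  elim=> [|a l IH]; first by apply: uf_mono (uf_true p) _.
  apply: uf_mono (uf_meet (H a) IH) _ => x [h1 h2] b.
  by rewrite inE => /orP[/eqP -> //|]; exact: h2.
by apply: uf_mono (L (enum A)) _ => x h b; apply: h; rewrite mem_enum.
Qed.

Lemma uf_precedes (r : ufilter) x : r (precedes x).
Proof. apply: uf_mono (uf_beyond r (last_idx x)) _ => y; exact: beyond_precedes. Qed.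

Definition sum_set (p r : ufilter) (B : lword -> Prop) : Prop := p (fun x => r (shift x B)).

Section Sum.
Variables p r : ufilter.

Lemma sum_mono B C : sum_set p r B -> (forall x, B x -> C x) -> sum_set p r C.
Proof.
move=> H BC; apply: uf_mono H _ => x h; apply: uf_mono h _ => y [h1 h2].
by split => //; exact: BC.
Qed.

Lemma sum_meet B C : sum_set p r B -> sum_set p r C -> sum_set p r (fun x => B x /\ C x).
Proof.
move=> HB HC; apply: uf_mono (uf_meet HB HC) _ => x [h1 h2].
by apply: uf_mono (uf_meet h1 h2) _ => y [[a b] [_ c]].
Qed.

Lemma sum_proper : sum_set p r (fun _ => False) -> False.
Proof.
by move=> h; apply: (uf_proper p); apply: uf_mono h _ => x /uf_inhabited [y [_ []]].
Qed.

Lemma sum_ultra B : sum_set p r B \/ sum_set p r (fun x => ~ B x).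
Proof.
case: (uf_ultra p (fun x => r (shift x B))) => h; [by left | right].
apply: uf_mono h _ => x nh; case: (uf_ultra r (shift x B)) => // h2.
apply: uf_mono (uf_meet h2 (uf_precedes r x)) _ => y [h3 h4].
by split => // hb; apply: h3.
Qed.

Lemma sum_beyond n : sum_set p r (beyond n).
Proof.
apply: uf_mono (uf_beyond p n) _ => x bx; apply: uf_mono (uf_beyond r (last_idx x)) _ => y by_.
have lt := beyond_precedes by_; split => //; split.
  by apply: increasing_cat => //; [exact: bx.1 | exact: by_.1].
by rewrite first_idx_cat ?(beyond_nil bx) //; exact: bx.2.
Qed.
End Sum.

Definition usum (p r : ufilter) : ufilter :=
  UFilter (sum_set p r) (@sum_mono p r) (@sum_meet p r) (@sum_proper p r)
    (@sum_ultra p r) (@sum_beyond p r).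

Notation "p \+ r" := (usum p r) (at level 50, left associativity).

Lemma usumA (p r u : ufilter) : p \+ r \+ u = p \+ (r \+ u).
Proof.
apply: ufilter_ext => B /=; rewrite /sum_set /=; rewrite /sum_set.
split => h; apply: uf_mono h _ => x hx;
  apply: uf_mono (uf_meet hx (uf_beyond r (last_idx x))) _ => y [h1 ty];
  have ny := beyond_nil ty; have lt := beyond_precedes ty.
- apply: uf_mono h1.2 _ => z [h2 h3]; rewrite /precedes last_idx_cat // in h2.
  by rewrite /shift /precedes first_idx_cat // ?catA; split.
- split => //; apply: uf_mono h1 _ => z [h2 [h3 h4]].
  by split; [rewrite /precedes last_idx_cat | rewrite catA in h4].
Qed.

Definition idempotent (p : ufilter) : Prop := p \+ p = p.

Definition subst (a : A) (x : lword) : lword :=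
  map (fun pr => (pr.1, Some (odflt a pr.2))) x.

Lemma idxs_subst a x : idxs (subst a x) = idxs x.
Proof. by rewrite /idxs /subst -map_comp; apply: eq_map. Qed.

Lemma precedes_subst a x y : precedes (subst a x) (subst a y) = precedes x y.
Proof. by rewrite /precedes /last_idx /first_idx !idxs_subst. Qed.

Lemma beyond_subst a n x : beyond n (subst a x) <-> beyond n x.
Proof. by rewrite /beyond /increasing /first_idx idxs_subst; case: x. Qed.

Section Image.
Variables (a : A) (p : ufilter).

Definition subst_set (B : lword -> Prop) : Prop := p (fun x => B (subst a x)).

Lemma subst_mono B C : subst_set B -> (forall x, B x -> C x) -> subst_set C.
Proof. by move=> h H; apply: uf_mono h _ => x; exact: H. Qed.

Lemma subst_meet B C : subst_set B -> subst_set C -> subst_set (fun x => B x /\ C x).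
Proof. exact: uf_meet. Qed.

Lemma subst_proper : subst_set (fun _ => False) -> False.
Proof. exact: uf_proper. Qed.

Lemma subst_ultra B : subst_set B \/ subst_set (fun x => ~ B x).
Proof. exact: (uf_ultra p (fun x => B (subst a x))). Qed.

Lemma subst_beyond n : subst_set (beyond n).
Proof. by apply: uf_mono (uf_beyond p n) _ => x; rewrite beyond_subst. Qed.
End Image.

Definition subst_uf (a : A) (p : ufilter) : ufilter :=
  UFilter (subst_set a p) (@subst_mono a p) (@subst_meet a p) (@subst_proper a p)
    (@subst_ultra a p) (@subst_beyond a p).

Lemma subst_uf_sum a p r : subst_uf a (p \+ r) = subst_uf a p \+ subst_uf a r.
Proof.
apply: ufilter_ext => B; rewrite /= /subst_set /= /sum_set /= /subst_set /=.
split => h; apply: uf_mono h _ => x hx; apply: uf_mono hx _ => y [h1 h2]; rewrite /shift.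
- by rewrite precedes_subst -map_cat.
- by rewrite precedes_subst in h1; rewrite /subst map_cat.
Qed.

Definition constant (x : lword) : Prop := all (fun pr => pr.2 != None) x.
Definition variable (x : lword) : Prop := has (fun pr => pr.2 == None) x.

Lemma subst_constant a x : constant x -> subst a x = x.
Proof. by elim: x => //= [[n o] x] IH /andP[h1 h2]; rewrite IH //; case: o h1. Qed.

Lemma constant_subst a x : constant (subst a x).
Proof. by rewrite /constant /subst all_map; apply/allP. Qed.

Lemma subst_uf_constant a p : subst_uf a p constant.
Proof. by apply: uf_mono (uf_true p) _ => x _; exact: constant_subst. Qed.

Lemma subst_uf_id a (p : ufilter) : p constant -> subst_uf a p = p.
Proof.
move=> pW; apply: ufilter_incl_eq => B /= h.
apply: uf_mono (uf_meet h pW) _ => x [h1 h2]; by rewrite -(subst_constant a h2).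
Qed.

Lemma sum_constant (p r : ufilter) : p constant -> r constant -> (p \+ r) constant.
Proof.
move=> pW rW; apply: uf_mono pW _ => x wx.
apply: uf_mono (uf_meet rW (uf_precedes r x)) _ => y [wy l].
by split => //; rewrite /constant all_cat; apply/andP.
Qed.

Lemma sum_variable_l (p r : ufilter) : p variable -> (p \+ r) variable.
Proof.
move=> pV; apply: uf_mono pV _ => x vx; apply: uf_mono (uf_precedes r x) _ => y l.
by split => //; rewrite /variable has_cat vx.
Qed.

Lemma sum_variable_r (p r : ufilter) : r variable -> (p \+ r) variable.
Proof.
move=> rV; apply: uf_mono (uf_true p) _ => x _.
apply: uf_mono (uf_meet rV (uf_precedes r x)) _ => y [vy l].
by split => //; rewrite /variable has_cat vy orbT.
Qed.

(* The topology: K is closed when it contains every ultrafilter p all of whose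
   members are members of some ultrafilter of K. *)
Definition closed (K : ufilter -> Prop) : Prop :=
  forall p : ufilter, (forall B, p B -> exists r : ufilter, K r /\ r B) -> K p.

Definition nonempty (K : ufilter -> Prop) : Prop := exists p, K p.
Definition incl (K1 K2 : ufilter -> Prop) : Prop := forall p, K1 p -> K2 p.
Definition meet (CC : (ufilter -> Prop) -> Prop) : ufilter -> Prop :=
  fun p => forall K, CC K -> K p.

Lemma ufilter_of_filter (Fl : (lword -> Prop) -> Prop) : filter.ProperFilter Fl ->
  (forall n, Fl (beyond n)) -> exists p : ufilter, forall B, Fl B -> p B.
Proof.
move=> PF hT; have [G [UG sub]] := filter.ultraFilterLemma PF.
have GS : forall B C : lword -> Prop, G B -> (forall x, B x -> C x) -> G C.
  by move=> B C h H; exact: (filter.filterS H h).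
have GI : forall B C : lword -> Prop, G B -> G C -> G (fun x => B x /\ C x).
  by move=> B C h1 h2; exact: (filter.filterI h1 h2).
have G0 : G (fun _ => False) -> False.
  by move=> h; exact: (filter.filter_not_empty G h).
have GU : forall B, G B \/ G (fun x => ~ B x).
  by move=> B; exact: (filter.in_ultra_setVsetC B UG).
have GT : forall n, G (beyond n) by move=> n; exact: sub (hT n).
by exists (UFilter G GS GI G0 GU GT).
Qed.

Lemma ufilter_containing (Z : lword -> Prop) :
  (forall n, exists x, Z x /\ beyond n x) -> exists p : ufilter, p Z.
Proof.
move=> hZ.
pose Fl := fun B : lword -> Prop => exists n, forall x, Z x -> beyond n x -> B x.
have FF : filter.Filter Fl.
  split.
  - by exists 0.
  - move=> B C [n hn] [m hm]; exists (maxn n m) => x zx tx; split.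
    + by apply: hn zx (beyond_mono _ tx); rewrite leq_maxl.
    + by apply: hm zx (beyond_mono _ tx); rewrite leq_maxr.
  - by move=> B C BC [n hn]; exists n => x zx tx; apply: BC; exact: hn.
have PF : filter.ProperFilter Fl.
  apply: filter.Build_ProperFilter_ex => B [n hn].
  by have [x [zx tx]] := hZ n; exists x; exact: hn.
have [p hp] := ufilter_of_filter PF (fun n => ex_intro _ n (fun x _ tx => tx)).
by exists p; apply: hp; exists 0.
Qed.

Lemma compact (KK : (ufilter -> Prop) -> Prop) :
  (exists K, KK K) -> (forall K, KK K -> closed K /\ nonempty K) ->
  (forall K1 K2, KK K1 -> KK K2 -> exists K3, KK K3 /\ incl K3 K1 /\ incl K3 K2) ->
  nonempty (meet KK).
Proof.
move=> [K0 hK0] hK hD.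
pose Fl := fun B : lword -> Prop => exists K, KK K /\ forall r : ufilter, K r -> r B.
have FF : filter.Filter Fl.
  split.
  - by exists K0; split => // r _; exact: uf_true.
  - move=> B C [K1 [h1 g1]] [K2 [h2 g2]]; have [K3 [h3 [i1 i2]]] := hD _ _ h1 h2.
    by exists K3; split => // r r3; exact: (uf_meet (g1 r (i1 r r3)) (g2 r (i2 r r3))).
  - move=> B C BC [K [h g]]; exists K; split => // r /g rB; exact: (uf_mono rB BC).
have PF : filter.ProperFilter Fl.
  apply: filter.Build_ProperFilter_ex => B [K [h g]].
  have [_ [r Kr]] := hK K h; exact: uf_inhabited (g r Kr).
have [p hp] :=
  ufilter_of_filter PF (fun n => ex_intro _ K0 (conj hK0 (fun r _ => uf_beyond r n))).
exists p => K h; apply: (proj1 (hK K h)) => B pB.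
apply: NNPP => nE; apply: (uf_compl pB); apply: hp; exists K; split => // r Kr.
by case: (uf_ultra r B) => // rB; case: nE; exists r.
Qed.

Lemma closed_member D : closed (fun r : ufilter => r D).
Proof.
move=> p hp; case: (uf_ultra p D) => // /hp [r [h1 h2]]; case: (uf_compl h1 h2).
Qed.

Lemma closed_meet (CC : (ufilter -> Prop) -> Prop) :
  (forall K, CC K -> closed K) -> closed (meet CC).
Proof.
move=> hC p hp K CK; apply: (hC K CK) => B /hp [r [h1 h2]].
by exists r; split => //; exact: h1.
Qed.

Lemma closed_inter K D : closed K -> closed (fun r : ufilter => K r /\ r D).
Proof.
move=> cK p hp; split.
- by apply: cK => B /hp [r [[h1 _] h2]]; exists r.
- by case: (uf_ultra p D) => // /hp [r [[_ h1] h2]]; case: (uf_compl h1 h2).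
Qed.

(* Zorn's lemma: a family of nonempty closed sets which is closed under
   nonempty intersections has a minimal member (chains have nonempty meets
   by compactness). *)
Lemma zorn_minimal (P : (ufilter -> Prop) -> Prop) :
  (forall K, P K -> closed K /\ nonempty K) ->
  (forall CC, (exists K, CC K) -> (forall K, CC K -> P K) -> nonempty (meet CC) ->
     P (meet CC)) ->
  (exists K, P K) ->
  exists M, P M /\ forall K, P K -> incl K M -> incl M K.
Proof.
move=> hP hC [K0 PK0].
pose T := {K : ufilter -> Prop | P K}.
pose R := fun k1 k2 : T => boolp.asbool (incl (sval k2) (sval k1)).
have [t tmax] : exists t, classical_sets.premaximal R t.
  apply: (classical_sets.ZL_preorder (exist _ K0 PK0)).
  - by move=> k; apply/boolp.asboolP.
  - move=> k1 k2 k3 /boolp.asboolP h1 /boolp.asboolP h2.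
    by apply/boolp.asboolP => p /h2; exact: h1.
  - move=> AA Atot; have [[k Ak]|nA] := classic (exists k, AA k); last first.
      by exists (exist _ K0 PK0) => k Ak; case: nA; exists k.
    pose CC := fun K => exists k : T, AA k /\ sval k = K.
    have CCP : forall K, CC K -> P K by move=> K [k0 [_ <-]]; exact: (svalP k0).
    have chain_meet : nonempty (meet CC).
      apply: compact; first by exists (sval k), k.
      - by move=> K /CCP; exact: hP.
      - move=> K1 K2 [k1 [A1 <-]] [k2 [A2 <-]].
        case: (Atot _ _ A1 A2) => /boolp.asboolP h.
        + by exists (sval k2); split; [exists k2 | split => // ? ?].
        + by exists (sval k1); split; [exists k1 | split => // ? ?].
    have PI := hC CC (ex_intro _ (sval k) (ex_intro _ k (conj Ak erefl))) CCP chain_meet.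
    exists (exist _ _ PI) => k' Ak'; apply/boolp.asboolP => p /= h.
    by apply: h; exists k'.
exists (sval t); split; first exact: (svalP t).
move=> K PK sub p Mp.
have : R t (exist _ K PK) by apply/boolp.asboolP.
by move=> /tmax /boolp.asboolP /(_ p Mp).
Qed.

Lemma closed_right_translate K (x : ufilter) :
  closed K -> closed (fun y => exists z, K z /\ y = z \+ x).
Proof.
move=> cK p hp.
pose KB := fun B (z : ufilter) => K z /\ z (fun w => x (shift w B)).
pose KK := fun K' => exists B, p B /\ K' = KB B.
have [z hz] : nonempty (meet KK).
  apply: compact.
  - by exists (KB (fun _ => True)), (fun _ => True); split => //; exact: uf_true.
  - move=> K' [B [pB ->]]; split; first exact: closed_inter.
    by have [y [[z [Kz ->]] h]] := hp B pB; exists z.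
  - move=> K1 K2 [B1 [p1 ->]] [B2 [p2 ->]]; exists (KB (fun w => B1 w /\ B2 w)).
    split; first by exists (fun w => B1 w /\ B2 w); split => //; exact: uf_meet.
    by split => r [Kr h]; split => //; apply: uf_mono h _ => w hw;
      apply: uf_mono hw _ => v [l [h1 h2]].
have Kz : K z by have [] := hz (KB (fun _ => True)) (ex_intro _ _ (conj (uf_true p) erefl)).
exists z; split => //; apply: ufilter_incl_eq => B pB.
by have [] := hz (KB B) (ex_intro _ B (conj pB erefl)).
Qed.

Lemma closed_right_solutions K (x e : ufilter) :
  closed K -> closed (fun y => K y /\ y \+ x = e).
Proof.
move=> cK p hp; split.
- by apply: cK => B /hp [r [[h1 _] h2]]; exists r.
- apply: esym; apply: ufilter_incl_eq => B eB; case: (uf_ultra (p \+ x) B) => // h.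
  have [r [[_ hr] rB]] := hp _ h.
  have : (r \+ x) (fun w => ~ B w) by exact: rB.
  by rewrite hr => h2; case: (uf_compl eB h2).
Qed.

Definition semigroup (K : ufilter -> Prop) : Prop :=
  forall p r, K p -> K r -> K (p \+ r).

(* For x in a minimal closed subsemigroup M, both M + x and
   {y in M | y + x = x} are closed subsemigroups of M, hence equal to M. *)
Lemma ellis_numakura (T : ufilter -> Prop) :
  closed T -> nonempty T -> semigroup T -> exists e, T e /\ idempotent e.
Proof.
move=> cT neT sT.
pose P := fun K => [/\ closed K, nonempty K, semigroup K & incl K T].
have [M [[cM [x Mx0] sM MT] minM]] : exists M, P M /\ forall K, P K -> incl K M -> incl M K.
  apply: zorn_minimal; [by move=> K [? ? _ _] | | by exists T; split].
  move=> CC [K0 C0] CP ne; split => //.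
  - by apply: closed_meet => K /CP [].
  - by move=> p r hp hr K CK; have [_ _ sK _] := CP K CK; apply: sK; [exact: hp|exact: hr].
  - by move=> p /(_ K0 C0); have [_ _ _ KT] := CP K0 C0; exact: KT.
pose Mx := fun y => exists z, M z /\ y = z \+ x.
have PMx : P Mx.
  split; [exact: closed_right_translate | by exists (x \+ x), x | |].
  - move=> p r [z1 [h1 ->]] [z2 [h2 ->]]; exists (z1 \+ x \+ z2).
    by split; [exact: sM (sM _ _ h1 Mx0) h2 | rewrite !usumA].
  - by move=> p [z [h ->]]; apply: MT; exact: sM.
have MxM : incl Mx M by move=> p [z [h ->]]; exact: sM.
have [z [Mz xz]] := minM Mx PMx MxM x Mx0.
pose N := fun y => M y /\ y \+ x = x.
have PN : P N.
  split; [exact: closed_right_solutions | by exists z | |].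
  - by move=> p r [hp ep] [hr er]; split; [exact: sM | rewrite usumA er].
  - by move=> p [h _]; exact: MT.
have [_ xx] := minM N PN (fun p h => h.1) x Mx0.
by exists x; split => //; exact: MT.
Qed.

Definition below (r q : ufilter) : Prop := r \+ q = r /\ q \+ r = r.

Lemma exists_uf_constant (a0 : A) : exists p : ufilter, p constant.
Proof. by apply: ufilter_containing => n; exists [:: (n.+1, Some a0)]. Qed.

Lemma exists_uf_variable : exists p : ufilter, p variable.
Proof. by apply: ufilter_containing => n; exists [:: (n.+1, None)]. Qed.

(* An idempotent concentrated on constant words and minimal among such: an
   idempotent q of a minimal closed left ideal L of the constant ultrafilters.
   If r is a constant idempotent below q, the closed left ideal of constant
   ultrafilters z + r lies in L, so it equals L and q = z + r; then
   q = q + r = r. *)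
Lemma minimal_constant_idempotent (a0 : A) : exists q : ufilter,
  [/\ q constant, idempotent q &
      forall r : ufilter, r constant -> idempotent r -> below r q -> r = q].
Proof.
pose left_ideal := fun K => [/\ closed K, nonempty K,
  incl K (fun p => p constant) & forall y z : ufilter, y constant -> K z -> K (y \+ z)].
have [L [[cL neL LW iL] minL]] :
    exists L, left_ideal L /\ forall K, left_ideal K -> incl K L -> incl L K.
  apply: zorn_minimal; [by move=> K [? ? _ _] | |].
  - move=> CC [K0 C0] CP ne; split => //.
    + by apply: closed_meet => K /CP [].
    + by move=> p /(_ K0 C0); have [_ _ KW _] := CP K0 C0; exact: KW.
    + move=> y z yW hz K CK; have [_ _ _ iK] := CP K CK; apply: iK => //; exact: hz.
  - exists (fun p : ufilter => p constant); split => //; first exact: closed_member.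
    + exact: exists_uf_constant.
    + by move=> y z yW zW; apply: sum_constant.
have [q [Lq qq]] : exists q, L q /\ idempotent q.
  by apply: ellis_numakura => // p r Lp Lr; apply: iL => //; exact: LW.
exists q; split => //; first exact: LW.
move=> r rW rr [rq qr].
have Lr : L r by rewrite -rq; apply: iL.
pose Lr' := fun y => exists z : ufilter, z constant /\ y = z \+ r.
have ideal_r : left_ideal Lr'.
  split; [exact/closed_right_translate/closed_member | by exists r, r | |].
  - by move=> p [z [zW ->]]; apply: sum_constant.
  - move=> y p yW [z [zW ->]]; exists (y \+ z).
    by split; [exact: sum_constant | rewrite usumA].
have Lr'L : incl Lr' L by move=> p [z [zW ->]]; exact: iL.
have [z [zW qz]] := minL Lr' ideal_r Lr'L q Lq.
have : q \+ r = q by rewrite qz usumA rr.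
by rewrite qr.
Qed.

(* Above every idempotent q there is an idempotent p concentrated on variable
   words: an idempotent u of the closed semigroup {z + q | z variable} gives
   p = q + u. *)
Lemma variable_idempotent_above (q : ufilter) : idempotent q ->
  exists p : ufilter, [/\ p variable, idempotent p & below p q].
Proof.
move=> qq.
pose T := fun y => exists z : ufilter, z variable /\ y = z \+ q.
have [u [[z [zV uz]] uu]] : exists u, T u /\ idempotent u.
  apply: ellis_numakura; first exact/closed_right_translate/closed_member.
  - by have [v0 v0V] := exists_uf_variable; exists (v0 \+ q), v0.
  - move=> p r [z1 [h1 ->]] [z2 [h2 ->]]; exists (z1 \+ q \+ z2).
    by split; [do 2 apply: sum_variable_l | rewrite !usumA].
have uq : u \+ q = u by rewrite uz usumA qq.
exists (q \+ u); split.
- by apply: sum_variable_r; rewrite uz; apply: sum_variable_l.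
- by rewrite /idempotent usumA -(usumA u q u) uq uu.
- by split; [rewrite usumA uq | rewrite -usumA qq].
Qed.

(* The key pair: an idempotent q on constant words and an ultrafilter p on
   variable words all of whose substitution images equal q; each image is a
   constant idempotent below q. *)
Lemma constant_variable_pair (a0 : A) : exists q p : ufilter,
  [/\ q constant, idempotent q, p variable & forall b, subst_uf b p = q].
Proof.
have [q [qW qq qmin]] := minimal_constant_idempotent a0.
have [p [pV pp [pq qp]]] := variable_idempotent_above qq.
exists q, p; split => // b; apply: qmin.
- exact: subst_uf_constant.
- by rewrite /idempotent -subst_uf_sum pp.
- by split; rewrite -{1}(subst_uf_id b qW) -subst_uf_sum ?pq ?qp.
Qed.

Section Construction.
Variable s : nat -> seq (option A).
Variables (q p : ufilter).
Hypotheses (q_idem : idempotent q) (p_var : p variable)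
  (p_subst : forall b, subst_uf b p = q).
Variables (a0 : A) (C : seq A -> Prop).

Definition value (x : lword) : seq (option A) :=
  flatten [seq vsub (s pr.1) pr.2 | pr <- x].
Definition cvalue (y : lword) : seq A :=
  flatten [seq csub (s pr.1) (odflt a0 pr.2) | pr <- y].

Lemma csub_vsub (w : seq (option A)) (o : option A) (a : A) :
  csub (vsub w o) a = csub w (odflt a o).
Proof. by rewrite /csub /vsub -map_comp; apply: eq_map => -[b|]; case: o. Qed.

Lemma csub_value x a : csub (value x) a = cvalue (subst a x).
Proof.
rewrite /csub /value map_flatten -map_comp /cvalue /subst -map_comp; congr flatten.
by apply: eq_map => pr /=; rewrite -/(csub _ _) csub_vsub.
Qed.

Lemma cvalue_cat x y : cvalue (x ++ y) = cvalue x ++ cvalue y.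
Proof. by rewrite /cvalue map_cat flatten_cat. Qed.

Definition in_C (y : lword) : Prop := C (cvalue y).
Hypothesis q_C : q in_C.

(* the q-recurrent part of Q: by idempotence it is in q whenever Q is, and it
   is again recurrent *)
Definition star (Q : lword -> Prop) : lword -> Prop := fun y => Q y /\ q (shift y Q).

Lemma star_in Q : q Q -> q (star Q).
Proof.
move=> hQ; have h : (q \+ q) Q by rewrite q_idem.
exact: uf_meet hQ h.
Qed.

Lemma star_shift Q y : star Q y -> q (shift y (star Q)).
Proof.
move=> [Qy hy]; have h : (q \+ q) (shift y Q) by rewrite q_idem.
apply: uf_mono (uf_meet3 hy h (uf_beyond q (last_idx y))) _ => w [[l Qw] [h2 tw]].
split => //; split => //; apply: uf_mono h2 _ => z [l2 [l3 Qz]]; split.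
  by rewrite /precedes last_idx_cat // (beyond_nil tw).
by rewrite -catA.
Qed.

(* a member of q contains all substitution instances of some variable word
   beyond any given index, since p is concentrated on variable words *)
Lemma variable_witness Q N : q Q ->
  exists x, variable x /\ beyond N x /\ forall b, Q (subst b x).
Proof.
move=> hQ; have h : p (fun x => forall b, Q (subst b x)).
  by apply: uf_forall => b; move: hQ; rewrite -(p_subst b).
by have [x [h1 [h2 h3]]] := uf_inhabited (uf_meet3 p_var (uf_beyond p N) h); exists x.
Qed.

Definition witness (Q : lword -> Prop) (N : nat) : lword :=
  epsilon (inhabits ([::] : lword))
    (fun x => variable x /\ beyond N x /\ forall b, Q (subst b x)).

Lemma witnessP Q N : q Q ->
  variable (witness Q N) /\ beyond N (witness Q N) /\ forall b, Q (subst b (witness Q N)).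
Proof. by move=> /(variable_witness N); apply: epsilon_spec. Qed.

Definition next_set (Q : lword -> Prop) (x : lword) : lword -> Prop :=
  star (fun y => Q y /\ forall b, shift (subst b x) Q y).

(* Stage n is the pair (Q_n, N_n); the n-th word X n is chosen in Q_n beyond N_n. *)
Fixpoint stage n : (lword -> Prop) * nat :=
  if n is n'.+1 then
    let x := witness (stage n').1 (stage n').2 in (next_set (stage n').1 x, last_idx x)
  else (star in_C, 0).

Definition Q_ n := (stage n).1.
Definition X n := witness (Q_ n) (stage n).2.

Lemma stage_recurrent n y : Q_ n y -> q (shift y (Q_ n)).
Proof. by case: n => [|n] /star_shift. Qed.

Lemma stage_in n : q (Q_ n).
Proof.
elim: n => [|n IH]; first exact: star_in.
have [_ [_ Xn_in]] := witnessP (stage n).2 IH.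
apply: star_in; apply: uf_meet IH (uf_forall _) => b.
exact: stage_recurrent (Xn_in b).
Qed.

Lemma XP n :
  variable (X n) /\ beyond (stage n).2 (X n) /\ forall b, Q_ n (subst b (X n)).
Proof. exact: witnessP (stage_in n). Qed.

Lemma Q_S n y : Q_ n.+1 y -> Q_ n y /\ forall b, shift (subst b (X n)) (Q_ n) y.
Proof. by case. Qed.

Lemma Q_antitone m n y : m <= n -> Q_ n y -> Q_ m y.
Proof.
elim: n => [|n IH]; first by rewrite leqn0 => /eqP ->.
by rewrite leq_eqVlt => /orP[/eqP -> // | /IH h /Q_S [/h]].
Qed.

Lemma combination_in (ls : seq nat) (as_ : seq A) m :
  size ls = size as_ -> ls != [::] -> sorted ltn ls -> all (leq m) ls ->
  Q_ m (flatten [seq subst pr.2 (X pr.1) | pr <- zip ls as_]).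
Proof.
elim: ls as_ m => // l ls IH [|a as_] m //= [sz] _ srt /andP[ml al].
case: ls IH sz srt al => [|l' ls] IH sz srt al.
  by case: as_ sz => // _ /=; rewrite cats0; apply: Q_antitone ml _; exact: (XP l).2.2.
have := IH as_ l.+1 sz isT (path_sorted srt) (order_path_min ltn_trans srt).
by move=> /Q_S [_ /(_ a) [_ h]]; apply: Q_antitone ml h.
Qed.

Lemma X_increasing n : increasing (X n).
Proof. by have [_ [[w _] _]] := XP n. Qed.

Lemma X_precedes n : last_idx (X n) < first_idx (X n.+1).
Proof. by have [_ [[_ h] _]] := XP n.+1. Qed.

(* the words coded by the X n form an extracted subsequence of s, the block of
   X n being the indices from last_idx (X n.-1) + 1 up to last_idx (X n) *)
Lemma X_extracted : extracted (fun n => value (X n)) s.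
Proof.
move=> l; exists (fun i => if i is i'.+1 then (last_idx (X i')).+1 else 0); split => //.
split.
  move=> [|i] _ //; rewrite ltnS.
  exact: leq_trans (X_precedes i) (first_le_last (X_increasing _)).
move=> i _; have w := X_increasing i.
exists (idxs (X i)), (map snd (X i)); split; first by rewrite /idxs !size_map.
split; first by case: (X i) w.
split; first by case/andP: w.
split.
  apply/allP => n /(increasing_bounds w) /andP[h1 h2]; rewrite ltnS h2 andbT.
  by case: i w h1 h2 => // i w h1 _; apply: leq_trans (X_precedes i) h1.
split.
  by have [/hasP [pr pin /eqP e] _] := XP i; apply/mapP; exists pr.
by rewrite /value -/(unzip1 _) -/(unzip2 _) zip_unzip.
Qed.

(* a constant combination of the words value (X n) is the value of the
   corresponding combination of the X n, which lies in Q_0 and so in in_C *)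
Lemma cspan_X_in_C u : cspan (fun n => value (X n)) predT u -> C u.
Proof.
move=> [ls [as_ [sz [pos [srt [_ ->]]]]]].
have -> : flatten [seq csub (value (X pr.1)) pr.2 | pr <- zip ls as_] =
          cvalue (flatten [seq subst pr.2 (X pr.1) | pr <- zip ls as_]).
  by elim: (zip ls as_) => [|[l a] z IH] //=; rewrite cvalue_cat IH csub_value.
have ne : ls != [::] by case: ls pos sz srt.
by have [] := combination_in sz ne srt (introT allP (fun x _ => leq0n x)).
Qed.

Lemma extracted_into : exists t, extracted t s /\ forall u, cspan t predT u -> C u.
Proof.
by exists (fun n => value (X n)); split; [exact: X_extracted | exact: cspan_X_in_C].
Qed.

End Construction.
End Ultrafilters.

Theorem corollary2p11 (A : finType) (hA : 0 < #|A|)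
  (E : seq A -> Prop) (s : nat -> seq (option A))
  (hs : forall n, is_varword (s n))
  (hlarge : large E s) :
  exists t : nat -> seq (option A),
    extracted t s /\ (forall u, cspan t predT u -> E u).
Proof.
case/card_gt0P: hA => a0 _.
have [q [p [_ qq pV pq]]] := constant_variable_pair a0.
have [qE | qnotE] := uf_ultra _ q (fun y => E (cvalue s a0 y)).
- exact: (extracted_into qq pV pq qE).
- (* in the complement case largeness provides a combination lying in E *)
  have [t [et ht]] := extracted_into qq pV pq (C := fun u => ~ E u) qnotE.
  have [u [Eu cu]] := hlarge t et.
  by case: (ht u cu Eu).
Qed.
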